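(* Let $m\ge 3$ and $n$ be integers, and let $k$ be an integer with $1\le k\le n^2-3n+2$. Write $k=(n-1)q+r$ with integers $q\ge 0$ and $1\le r\le n-1$. Let $M_1=(\mu_{ij})$ be the $n\times n$ $0/1$ matrix with $\mu_{1,n-1}=\mu_{1,n}=1$, $\mu_{i,i-1}=1$ for $2\le i\le n$, and all other entries $0$. Let $\mathbb{A}_k=(a^{(k)}_{i_1\ldots i_m})$ be the order $m$, dimension $n$ nonnegative tensor with: (a) $a^{(k)}_{ij\ldots j}=\mu_{ij}$ for all $i,j\in[n]$; (b) $a^{(k)}_{ii_2\ldots i_m}=1$ whenever $i\in[n]\setminus\{r-q,r-q+1,\ldots,r,r+1\}\pmod n$ and the set of distinct values among $i_2,\ldots,i_m$ equals $\{r-q-1,r\}\pmod n$; (c) all other entries equal $0$. Then (i) $\gamma_j(\mathbb{A}_k)=k+n-j$ for $j=1,\ldots,n-1$ and $\gamma_n(\mathbb{A}_k)=k+n$; (ii) $\gamma(\mathbb{A}_k)=k+n$.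
   Context: Tensors of order $m$ and dimension $n$ have entries indexed by $[n]^m$, $[n]=\{1,\ldots,n\}$. For an integer $a$, $|a|_n$ denotes the least positive integer congruent to $a$ modulo $n$, and for integers $a_1,\ldots,a_s$ the notation $\{a_1,\ldots,a_s\}\pmod n$ means the set $\{|a_1|_n,\ldots,|a_s|_n\}\subseteq[n]$. General product: for a tensor $\mathbb{A}$ of order $m\ge2$ and $\mathbb{B}$ of order $k\ge1$, both of dimension $n$, $\mathbb{A}\mathbb{B}$ is the tensor of order $(m-1)(k-1)+1$ with entries $(\mathbb{A}\mathbb{B})_{i\alpha_1\ldots\alpha_{m-1}}=\sum_{i_2,\ldots,i_m=1}^n a_{ii_2\ldots i_m}b_{i_2\alpha_1}\cdots b_{i_m\alpha_{m-1}}$ ($i\in[n]$, $\alpha_1,\ldots,\alpha_{m-1}\in[n]^{k-1}$); this product is associative, and $\mathbb{A}^k$ denotes the $k$-fold product. The majorization matrix $M(\mathbb{C})$ of a tensor $\mathbb{C}$ is the $n\times n$ matrix with $(M(\mathbb{C}))_{ij}=c_{ij\ldots j}$. For $j\in[n]$, a nonnegative tensor $\mathbb{A}$ is $j$-primitive if there is $k\ge1$ with $(M(\mathbb{A}^k))_{uj}>0$ for all $u\in[n]$; the least such $k$ is $\gamma_j(\mathbb{A})$. $\mathbb{A}$ is primitive if there is $r\ge1$ with $M(\mathbb{A}^r)>0$ entrywise, and the least such $r$ is the primitive degree $\gamma(\mathbb{A})$ (equivalently, the least $r$ with $T_{\mathbb{A}}^r(x)>0$ for all nonnegative nonzero $x$,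 where $T_{\mathbb{A}}(x)=(\mathbb{A}x)^{[1/(m-1)]}$). *)

From HB Require Import structures.
From mathcomp Require Import all_boot all_order all_algebra.
Set Implicit Arguments. Unset Strict Implicit. Unset Printing Implicit Defensive.
Import Order.TTheory GRing.Theory Num.Theory.
Local Open Scope ring_scope.

(* Indices: [n] = {1..n} is represented by 'I_n (0-based: index i <-> i+1).
   A tensor of dimension n is a function on index sequences; a tensor of order
   m is only ever evaluated on sequences of length m (the order is tracked
   separately). *)
Definition tensor (R : Type) (n : nat) := seq 'I_n -> R.

(* General product A B, A of order m, B of order d+1 (so each alpha_l has
   length d): (AB)_{i alpha_1 .. alpha_{m-1}} =
     sum_{i_2..i_m} a_{i i_2 .. i_m} b_{i_2 alpha_1} ... b_{i_m alpha_{m-1}}. *)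
Definition tmul (R : numDomainType) (n m d : nat) (A B : tensor R n) : tensor R n :=
  fun s => match s with
  | [::] => 0
  | i :: rest =>
      \sum_(t : (m.-1).-tuple 'I_n)
        A (i :: t) * \prod_(l < m.-1) B (tnth t l :: take d (drop (l * d) rest))
  end.

(* tpow m A p = A^(p+1), of order (m-1)^p + 1; A^(p+2) = A (A^(p+1)). *)
Fixpoint tpow (R : numDomainType) (n m : nat) (A : tensor R n) (p : nat) : tensor R n :=
  match p with
  | 0 => A
  | p'.+1 => tmul m ((m.-1) ^ p') A (tpow m A p')
  end.

Definition tens_pow (R : numDomainType) (n m : nat) (A : tensor R n) (k : nat) :=
  tpow m A k.-1.

Definition majo (R : numDomainType) (n ord : nat) (C : tensor R n) (i j : 'I_n) : R :=
  C (i :: nseq ord.-1 j).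

Definition majo_pow (R : numDomainType) (n m : nat) (A : tensor R n) (k : nat) :=
  majo ((m.-1) ^ k.-1 + 1) (tens_pow m A k).

Definition nonneg_tensor (R : numDomainType) (n : nat) (A : tensor R n) :=
  forall s, 0 <= A s.

Definition jprim_degree (R : numDomainType) (n m : nat) (A : tensor R n)
    (j : 'I_n) (g : nat) : Prop :=
  [/\ (1 <= g)%N,
      (forall u, 0 < majo_pow m A g u j) &
      (forall k, (1 <= k)%N -> (forall u, 0 < majo_pow m A k u j) -> (g <= k)%N)].

Definition prim_degree (R : numDomainType) (n m : nat) (A : tensor R n)
    (g : nat) : Prop :=
  [/\ (1 <= g)%N,
      (forall u j, 0 < majo_pow m A g u j) &
      (forall k, (1 <= k)%N -> (forall u j, 0 < majo_pow m A k u j) -> (g <= k)%N)].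

(* idx n a = |a|_n - 1, the 0-based index of the least positive integer
   congruent to a mod n. *)
Definition idx (n : nat) (a : int) : nat := `|((a - 1) %% n%:Z)%Z|%N.

Definition mu1 (n : nat) (i j : 'I_n) : bool :=
  ((val i == 0%N) && ((val j == n.-2) || (val j == n.-1)))
  || ((0 < val i)%N && ((val j).+1 == val i)).

Definition Atens (R : numDomainType) (n q r : nat) : tensor R n :=
  fun s => match s with
  | i :: ((j :: _) as t) =>
      if all (pred1 j) t then (mu1 i j)%:R
      else
        (( ~~ has (fun d => val i == idx n (r%:Z - q%:Z + d%:Z)) (iota 0 q.+2))
         && (perm_eq (undup (map val t)) (undup [:: idx n (r%:Z - q%:Z - 1); idx n r%:Z])))%:R
  | _ => 0
  end.

From HB Require Import structures.
From mathcomp Require Import all_boot all_order all_algebra.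
From mathcomp Require Import reals.
From mathcomp Require Import zify.
Set Implicit Arguments. Unset Strict Implicit. Unset Printing Implicit Defensive.
Import Order.TTheory GRing.Theory Num.Theory.

(* Only zero patterns matter.  For a nonnegative tensor, entry (u, j) of
   M(A^(t+1)) is positive iff some positive entry a_{u i_2 ... i_m} has every
   i_l in the support of column j of M(A^t); for A_k this is the set map
   [supp_step], so the support of column j of M(A^t) is the t-th iterate of
   [supp_step] on {j}.  Under it a singleton {x} moves to {x+1} until it reaches
   {n-1}, which spawns the arc {n, 1}; an arc moves forward by one at each step
   and grows by one whenever it contains n-1, since column n-1 feeds both rows n
   and 1.  After k-1 further steps it is the arc from r-q-1 to r, which contains
   both indices of the entries of type (b): these reach every row outside
   r-q, ..., r+1 and the shifted arc covers the rest.  One step earlier the row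
   r+1 is not yet reached, which gives minimality. *)

Section NonnegTensorPowers.
Local Open Scope ring_scope.
Variables (R : numDomainType) (n m : nat) (A : tensor R n).
Hypothesis A_ge0 : forall s, 0 <= A s.

Lemma tpow_ge0 p s : 0 <= tpow m A p s.
Proof.
elim: p s => [|p IHp] [|i s] //=; apply: sumr_ge0 => t _.
by apply: mulr_ge0 => //; apply: prodr_ge0 => l _.
Qed.

Lemma majo_pow1 u j : majo_pow m A 1 u j = A [:: u; j].
Proof. by []. Qed.

Lemma majo_powS p u j :
  majo_pow m A p.+2 u j =
  \sum_(t : (m.-1).-tuple 'I_n)
     A (u :: t) * \prod_(l < m.-1) majo_pow m A p.+1 (tnth t l) j.
Proof.
rewrite /majo_pow /majo /tens_pow /= !addn1 /=; apply: eq_bigr => t _.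
congr (_ * _); apply: eq_bigr => l _; rewrite drop_nseq take_nseq // expnSr.
by have := ltn_ord l; nia.
Qed.

Lemma majo_powS_gt0 p u j :
  0 < majo_pow m A p.+2 u j <->
  exists t : (m.-1).-tuple 'I_n,
    0 < A (u :: t) /\ forall l, 0 < majo_pow m A p.+1 (tnth t l) j.
Proof.
have gt0E (x : R) : 0 <= x -> (0 < x) = (x != 0).
  by move=> x_ge0; rewrite lt0r x_ge0 andbT.
have M_ge0 w : 0 <= majo_pow m A p.+1 w j by exact: tpow_ge0.
have term_ge0 (t : (m.-1).-tuple 'I_n) :
    0 <= A (u :: t) * \prod_(l < m.-1) majo_pow m A p.+1 (tnth t l) j.
  by rewrite mulr_ge0 ?prodr_ge0.
rewrite majo_powS gt0E ?sumr_ge0 // psumr_neq0 //.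
split=> [/hasP[t _ /=] | [t [At Mt]]].
  rewrite gt0E // mulf_eq0 negb_or => /andP[At /prodf_neq0 Mt].
  by exists t; split=> [|l]; rewrite gt0E //; apply: Mt.
by apply/hasP; exists t; rewrite ?mem_index_enum //= mulr_gt0 ?prodr_gt0.
Qed.

End NonnegTensorPowers.

Lemma idx_eq n (z : int) x : x < n ->
  (z = x.+1%:Z \/ z = x.+1%:Z - n%:Z)%R -> idx n z = x.
Proof.
move=> x_lt_n; rewrite /idx => -[->|->].
  by rewrite (_ : _ - 1 = x%:Z)%R ?modz_small //; lia.
rewrite (_ : _ - 1 = -1 * n%:Z + x%:Z)%R; last by lia.
by rewrite modzMDl modz_small //; lia.
Qed.

Lemma mu1_existsE n (p : nat -> bool) (u : 'I_n) : 1 < n ->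
  [exists w : 'I_n, p w && mu1 u w] =
  [|| (0 < u) && p u.-1 | (u == 0 :> nat) && (p n.-2 || p n.-1)].
Proof.
move=> n_gt1; apply/existsP/idP => [[w /andP[pw]] | ].
  case/orP=> [/andP[/eqP u0 /orP[] /eqP wE] | /andP[_ /eqP <-]];
    by rewrite ?u0 -?wE /= ?pw ?orbT.
have u1_lt_n : u.-1 < n by have := ltn_ord u; lia.
have n1_lt_n : n.-1 < n by lia.
have n2_lt_n : n.-2 < n by lia.
case/orP=> [/andP[u_gt0 pu] | /andP[u0 /orP[pw|pw]]].
- exists (Ordinal u1_lt_n); rewrite pu /mu1 /= u_gt0.
  by rewrite prednK ?eqxx ?orbT.
- by exists (Ordinal n2_lt_n); rewrite /mu1 /= pw u0 eqxx.
- by exists (Ordinal n1_lt_n); rewrite /mu1 /= pw u0 eqxx orbT.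
Qed.

Lemma exists_valE n (p : nat -> bool) x : x < n ->
  [exists w : 'I_n, p w && (w == x :> nat)] = p x.
Proof.
move=> x_lt_n; apply/existsP/idP => [[w /andP[pw /eqP <-]] // | px].
by exists (Ordinal x_lt_n); rewrite px eqxx.
Qed.

Definition pair_lo n q r := idx n (r%:Z - q%:Z - 1)%R.
Definition pair_hi n r := idx n (r%:Z)%R.
Definition excluded_row n q r (v : nat) : bool :=
  has (fun d => v == idx n (r%:Z - q%:Z + d%:Z)%R) (iota 0 q.+2).

Lemma Atens_ge0 (R : numDomainType) n q r s : (0 <= @Atens R n q r s)%R.
Proof. by case: s => [|i [|j t]] //=; case: ifP. Qed.

(* If S is the support of column j of M(A_k^t), this is the support of column j
   of M(A_k^(t+1)); the two disjuncts come from the entries of type (a) and (b). *)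
Definition supp_step n q r (S : {set 'I_n}) : {set 'I_n} :=
  [set u | [exists w in S, mu1 u w]
        || [&& [exists w in S, w == pair_lo n q r :> nat],
               [exists w in S, w == pair_hi n r :> nat] & ~~ excluded_row n q r u]].

(* [cyc_arc n c e] is the cyclic interval of the c+2 indices ending at e. *)
Definition on_arc n c e v : bool :=
  (v <= e <= v + c + 1) || (e < v) && (e + n <= v + c + 1).

Definition cyc_arc n c e : {set 'I_n} := [set w : 'I_n | on_arc n c e w].

Section AkColumns.
Variables n q r : nat.
Hypotheses (r_gt0 : 0 < r) (r_lt_n : r < n) (q_small : q + 3 <= n).

Local Notation step := (@supp_step n q r).
Local Notation lo := (pair_lo n q r).

Lemma pair_hiE : pair_hi n r = r.-1.
Proof. by apply: idx_eq; [lia | left; lia]. Qed.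

Lemma pair_lo_spec : lo < n /\ (lo + q + 2 = r \/ lo + q + 2 = n + r).
Proof.
case: (leqP (q + 2) r) => qr.
  by rewrite /pair_lo (@idx_eq n _ (r - q - 2)); [lia | lia | left; lia].
by rewrite /pair_lo (@idx_eq n _ (n + r - q - 2)); [lia | lia | right; lia].
Qed.

Lemma excluded_rowE v : v < n ->
  excluded_row n q r v = (v <= r <= v + q + 1) || (n + r <= v + q + 1).
Proof.
move=> v_lt_n.
have idxE d : d < q.+2 -> idx n (r%:Z - q%:Z + d%:Z)%R =
    if q < r + d then r + d - q.+1 else n + r + d - q.+1.
  by move=> d_lt; case: ifP => qrd; apply: idx_eq; lia.
apply/hasP/idP => [[d] | ].
  by rewrite mem_iota => /andP[_ d_lt] /eqP ->; rewrite idxE //; case: ifP; lia.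
case/orP=> vE.
  exists (v + q + 1 - r); first by rewrite mem_iota; lia.
  by rewrite idxE ?ifT; lia.
exists (v + q + 1 - n - r); first by rewrite mem_iota; lia.
by rewrite idxE ?ifF; lia.
Qed.

Lemma supp_step_arithE (p p' : nat -> bool) :
  (forall v a, v < n -> a < n -> a + q + 2 = r \/ a + q + 2 = n + r ->
     [|| (0 < v) && p v.-1, (v == 0) && (p n.-2 || p n.-1)
       | [&& p a, p r.-1 & ~~ ((v <= r <= v + q + 1) || (n + r <= v + q + 1))]]
     = p' v) ->
  step [set w : 'I_n | p w] = [set w : 'I_n | p' w].
Proof.
move=> stepE; have inP (P : pred 'I_n) :
    [exists w in [set w : 'I_n | p w], P w] = [exists w : 'I_n, p w && P w].
  by apply: eq_existsb => w; rewrite inE.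
have [lo_lt_n lo_eq] := pair_lo_spec.
apply/setP => u; rewrite !inE !inP mu1_existsE; last by lia.
rewrite !exists_valE ?pair_hiE //; last by lia.
by rewrite (excluded_rowE (ltn_ord u)) -orbA; apply: stepE.
Qed.

Local Notation pt x := [set w : 'I_n | w == x :> nat].

Lemma supp_step_pt x : x + 3 <= n -> step (pt x) = pt x.+1.
Proof.
move=> x_small.
apply: (@supp_step_arithE (pred1 x) (pred1 x.+1)) => v a v_lt a_lt a_eq /=.
by apply/idP/idP; [case/or3P | move=> /eqP ->]; lia.
Qed.

Lemma supp_step_pt_nm2 : step (pt n.-2) = cyc_arc n 0 0.
Proof. by apply: (@supp_step_arithE (pred1 n.-2)) => v a; rewrite /on_arc /=; lia. Qed.

Lemma supp_step_pt_nm1 : step (pt n.-1) = pt 0.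
Proof. by apply: (@supp_step_arithE (pred1 n.-1) (pred1 0)) => v a /=; lia. Qed.

Lemma supp_step_arc c e : e < n.-2 -> c < q \/ c = q /\ e.+1 < r ->
  step (cyc_arc n c e) = cyc_arc n c e.+1.
Proof.
move=> e_small c_small; apply: (@supp_step_arithE (on_arc n c e)) => v a v_lt a_lt a_eq.
rewrite /on_arc; apply/idP/idP; first by case/or3P; lia.
by case: (posnP v) => [v0 | v_gt0] h; apply/orP; [right; apply/orP; left | left]; lia.
Qed.

Lemma supp_step_arc_turn c : c < q -> step (cyc_arc n c n.-2) = cyc_arc n c.+1 0.
Proof.
move=> c_small.
by apply: (@supp_step_arithE (on_arc n c n.-2)) => v a; rewrite /on_arc; lia.
Qed.

Lemma supp_step_arc_last : step (cyc_arc n q r.-1) = setT.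
Proof.
have -> : setT = [set w : 'I_n | true] by apply/setP => w; rewrite !inE.
by apply: (@supp_step_arithE (on_arc n q r.-1) xpredT) => v a; rewrite /on_arc; lia.
Qed.

Lemma supp_step_setT : step setT = setT.
Proof.
have -> : setT = [set w : 'I_n | true] by apply/setP => w; rewrite !inE.
by apply: (@supp_step_arithE xpredT xpredT) => v a; lia.
Qed.

Lemma supp_step1 (j : 'I_n) : step [set j] = [set u | mu1 u j].
Proof.
have in1 (P : pred 'I_n) : [exists w in [set j], P w] = P j.
  by apply/existsP/idP => [[w /andP[/set1P -> //]] | Pj]; exists j; rewrite set11.
apply/setP => u; rewrite !inE !in1 pair_hiE; case: (mu1 u j) => //=.
by apply/negP => /and3P[/eqP j_lo /eqP j_hi _]; have := pair_lo_spec; lia.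
Qed.

Lemma iter_supp_step_setT d : iter d step setT = setT.
Proof. by elim: d => //= d ->; apply: supp_step_setT. Qed.

Lemma iter_arc_row c e : e <= n.-2 -> c < q \/ c = q /\ e < r ->
  iter e step (cyc_arc n c 0) = cyc_arc n c e.
Proof.
elim: e => [//|e IHe] e_small c_small /=.
by rewrite IHe ?supp_step_arc //; lia.
Qed.

Lemma iter_arc_turn c : c < q -> iter n.-1 step (cyc_arc n c 0) = cyc_arc n c.+1 0.
Proof.
move=> c_small; have -> : n.-1 = n.-2.+1 by lia.
by rewrite iterS iter_arc_row ?supp_step_arc_turn //; lia.
Qed.

Lemma iter_arc_turns c : c <= q -> iter (c * n.-1) step (cyc_arc n 0 0) = cyc_arc n c 0.
Proof.
by elim: c => [//|c IHc] c_small; rewrite mulSn iterD IHc ?iter_arc_turn //; lia.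
Qed.

Local Notation k := (q * n.-1 + r).

Lemma iter_arc_penult : iter k.-1 step (cyc_arc n 0 0) = cyc_arc n q r.-1.
Proof.
have -> : k.-1 = r.-1 + q * n.-1 by nia.
by rewrite iterD iter_arc_turns // iter_arc_row //; lia.
Qed.

Lemma iter_arc_full : iter k step (cyc_arc n 0 0) = setT.
Proof.
have -> : k = k.-1.+1 by nia.
by rewrite iterS iter_arc_penult supp_step_arc_last.
Qed.

Lemma iter_pt_climb x : x <= n.-2 -> iter (n.-2 - x) step (pt x) = pt n.-2.
Proof.
move=> x_small; move d_eq: (n.-2 - x) => d.
elim: d x x_small d_eq => [|d IHd] x x_small d_eq; first by have -> : x = n.-2 by lia.
by rewrite iterSr supp_step_pt ?IHd //; lia.
Qed.

Definition arc_delay (j : nat) := if j.+1 == n then n else n - j.+1.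

Lemma iter_col_arc (j : 'I_n) : iter (arc_delay j) step [set j] = cyc_arc n 0 0.
Proof.
have -> : [set j] = pt j by apply/setP => w; rewrite !inE.
rewrite /arc_delay; case: eqP => [j_last | j_lt].
  rewrite [X in iter X _ _](_ : n = (n.-2 - 0).+2); last by lia.
  rewrite iterSr iterS (_ : nat_of_ord j = n.-1); last by lia.
  by rewrite supp_step_pt_nm1 iter_pt_climb ?supp_step_pt_nm2.
rewrite (_ : n - j.+1 = (n.-2 - j).+1); last by have := ltn_ord j; lia.
by rewrite iterS iter_pt_climb ?supp_step_pt_nm2 //; have := ltn_ord j; lia.
Qed.

Lemma iter_col_full (j : 'I_n) g : k + arc_delay j <= g -> iter g step [set j] = setT.
Proof.
move=> g_large; rewrite -(subnK g_large) iterD [iter (k + _) _ _]iterD.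
by rewrite iter_col_arc iter_arc_full iter_supp_step_setT.
Qed.

Lemma iter_col_not_full (j : 'I_n) :
  Ordinal r_lt_n \notin iter (k + arc_delay j).-1 step [set j].
Proof.
have -> : (k + arc_delay j).-1 = k.-1 + arc_delay j by nia.
by rewrite iterD iter_col_arc iter_arc_penult inE /on_arc /=; lia.
Qed.

Variables (R : numDomainType) (m : nat).
Hypothesis m_ge3 : 2 < m.
Local Notation A := (@Atens R n q r).

Lemma Atens_consE u x s :
  A (u :: x :: s) =
  (if all (pred1 x) (x :: s) then (mu1 u x)%:R
   else (~~ excluded_row n q r u
         && perm_eq (undup (map val (x :: s))) (undup [:: lo; pair_hi n r]))%:R)%R.
Proof. by []. Qed.

Lemma Atens_tuple_gt0 d u (S : {set 'I_n}) :
  (exists t : d.+2.-tuple 'I_n, (0 < A (u :: t))%R /\ forall l, tnth t l \in S)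
  <-> u \in step S.
Proof.
have lo_hi : lo != pair_hi n r by rewrite pair_hiE; have := pair_lo_spec; lia.
have pair_undup : undup [:: lo; pair_hi n r] = [:: lo; pair_hi n r].
  by rewrite /= inE (negbTE lo_hi).
rewrite inE; split => [[t [At tS]] | ].
  have {}tS w : w \in (t : seq 'I_n) -> w \in S by move=> /tnthP[l ->].
  case: t At tS => [[|x s] // xs_size]; rewrite [tval _]/= Atens_consE.
  case: ifP => _; rewrite ltr0n lt0b.
    move=> ux xsS; apply/orP; left; apply/existsP; exists x.
    by rewrite xsS ?mem_head.
  move=> /andP[u_ok xs_pair] xsS.
  have pairP y : y \in [:: lo; pair_hi n r] -> [exists w in S, w == y :> nat].
    rewrite -pair_undup -(perm_mem xs_pair) mem_undup => /mapP[w xs_w ->].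
    by apply/existsP; exists w; rewrite xsS ?eqxx.
  by rewrite u_ok !pairP ?orbT // !inE eqxx ?orbT.
case/orP=> [/existsP[w /andP[wS uw]] | ].
  exists (nseq_tuple d.+2 w); split=> [|l]; last by rewrite tnth_nseq.
  by rewrite Atens_consE /= eqxx all_pred1_nseq ltr0n lt0b.
case/and3P=> /existsP[a /andP[aS /eqP a_lo]] /existsP[b /andP[bS /eqP b_hi]] u_ok.
have ba : (b == a) = false.
  by apply/negbTE; apply: contra lo_hi => /eqP ba; rewrite -a_lo -b_hi ba.
exists (cons_tuple a (nseq_tuple d.+1 b)); split=> [|l].
  rewrite Atens_consE ifF; last by rewrite /= ba andbF.
  rewrite ltr0n lt0b u_ok andTb; apply: uniq_perm; rewrite ?undup_uniq // => y.
  rewrite !mem_undup map_cons map_nseq !inE mem_nseq /= a_lo b_hi.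
  by case: (y == pair_hi n r); rewrite ?andbF ?orbT.
have := mem_tnth l (cons_tuple a (nseq_tuple d.+1 b)).
by rewrite inE mem_nseq => /orP[/eqP -> | /andP[_ /eqP ->]].
Qed.

Lemma majo_pow_gt0E t (j u : 'I_n) :
  (0 < majo_pow m A t.+1 u j)%R = (u \in iter t.+1 step [set j]).
Proof.
(* Entries of type (b) need at least two indices i_2, i_3. *)
have -> : m = (m - 3).+3 by lia.
elim: t u => [|t IHt] u.
  by rewrite majo_pow1 Atens_consE /= eqxx ltr0n lt0b supp_step1 inE.
rewrite iterS; apply/idP/idP.
  case/(majo_powS_gt0 _ (@Atens_ge0 R n q r)) => t' [At' Mt'].
  by apply/Atens_tuple_gt0; exists t'; split=> // l; rewrite -IHt.
case/(@Atens_tuple_gt0 (m - 3)) => t' [At' St'].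
by apply/(majo_powS_gt0 _ (@Atens_ge0 R n q r)); exists t'; split=> // l; rewrite IHt.
Qed.

Lemma majo_pow_col_gt0P g (j : 'I_n) : 0 < g ->
  (forall u, 0 < majo_pow m A g u j)%R <-> iter g step [set j] = setT.
Proof.
move=> g_gt0; rewrite -(prednK g_gt0); split=> [pos | full u].
  by apply/setP => u; rewrite in_setT -majo_pow_gt0E pos.
by rewrite majo_pow_gt0E full in_setT.
Qed.

Lemma jprim_degree_Atens (j : 'I_n) : jprim_degree m A j (k + arc_delay j).
Proof.
split=> [| | g g_gt0 /(majo_pow_col_gt0P j g_gt0) full]; first by nia.
  by apply/majo_pow_col_gt0P; [nia | exact: iter_col_full].
rewrite leqNgt; apply/negP => g_small; move: (iter_col_not_full j).
rewrite -(@subnK g (k + arc_delay j).-1) ?iterD ?full ?iter_supp_step_setT ?in_setT //.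
by move: g_small; nia.
Qed.

End AkColumns.

Theorem theorem3p3 (R : realType) (m n k q r : nat) :
  (3 <= m)%N -> (1 <= k)%N -> (k + 3 * n <= n ^ 2 + 2)%N ->
  k = ((n - 1) * q + r)%N -> (1 <= r)%N -> (r <= n - 1)%N ->
  [/\ (forall j : 'I_n, (j.+1 <= n - 1)%N ->
          jprim_degree m (@Atens R n q r) j (k + n - j.+1)),
      (forall j : 'I_n, j.+1 = n -> jprim_degree m (@Atens R n q r) j (k + n)) &
      prim_degree m (@Atens R n q r) (k + n)].
Proof.
move=> m_ge3 _ k_small k_eq r_gt0 r_small; subst k.
have r_lt_n : r < n by lia.
have q_small : q + 3 <= n.
  rewrite leqNgt; apply/negP => q_big.
  have : (n - 1) * (n - 2) <= (n - 1) * q by rewrite leq_mul2l; lia.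
  by move: k_small; rewrite -mulnn; nia.
have deg := jprim_degree_Atens r_gt0 r_lt_n q_small R m_ge3.
rewrite subn1 [n.-1 * q]mulnC; split.
- move=> j j_small; rewrite -addnBA; last by lia.
  by have := deg j; rewrite /arc_delay ifF //; lia.
- by move=> j j_last; have := deg j; rewrite /arc_delay j_last eqxx.
split=> [| u j | g g_gt0 pos]; first by nia.
  move: u; apply/majo_pow_col_gt0P => //; first by nia.
  by apply: iter_col_full => //; rewrite /arc_delay; case: ifP; lia.
have n1_lt_n : n.-1 < n by lia.
have [_ _ /(_ g g_gt0)] := deg (Ordinal n1_lt_n).
rewrite /arc_delay /= ifT; last by lia.
by apply=> u; apply: pos.
Qed.
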